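(* Let $M\ge1$. Given any $k\in\{0\}\times\mathbb{Z}^M_+$ and any $m\in\mathbb{Z}^{M+1}$ with $0\leq m\leq \min\{k,\tilde{k}\}$, there exists a transmission scattering sequence $\mathsf{p}\in\mathsf{S}_M^\prime$ such that $\bigl(\kappa^\prime(\mathsf{p}),\beta^\prime(\mathsf{p})\bigr)=(k,m)$.
   Context: Fix depths $z_{-1}<z_0<\cdots<z_M<z_{M+1}$; $\mathbb{Z}_+$ denotes the nonnegative integers. A transmission scattering sequence is a finite sequence $\mathsf{p}=(\mathsf{p}_0,\ldots,\mathsf{p}_L)$ with $\mathsf{p}_0=z_{-1}$, $\mathsf{p}_L=z_{M+1}$, $\mathsf{p}_i\in\{z_0,\ldots,z_M\}$ for $1\le i\le L-1$, and for every $0\le i\le L-1$ there is $-1\le j\le M$ with $\{\mathsf{p}_i,\mathsf{p}_{i+1}\}=\{z_j,z_{j+1}\}$; $\mathsf{S}_M^\prime$ is the set of these. For $0\le n\le M$, consider the maximal runs of consecutive indices $i$ with $\mathsf{p}_i\in\{z_n,\ldots,z_{M+1}\}$; the last such run (containing index $L$) is called the trunk run. Let $k_n$ be the number of such runs other than the trunk run, and $m_n$ the number of non-trunk runs of length at least 2. Set $\kappa^\prime(\mathsf{p})=(k_0,\ldots,k_M)$ and $\beta^\prime(\mathsf{p})=(m_0,\ldots,m_M)$. (Equivalently, collapsing the Dyck subpaths gives a tree with a distinguished root-to-tip trunk, and $k_n$, $m_n$ count the vertices, resp. branch points, at depth $z_n$ not on the trunk.) Notation: $\tilde{k}=(k_1,\ldots,k_M,0)$;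 $\min$ and $\le$ entrywise; $0$ denotes the zero vector. *)

From mathcomp Require Import all_boot.
Set Implicit Arguments. Unset Strict Implicit. Unset Printing Implicit Defensive.

(* Depth z_j (-1 <= j <= M+1) is encoded by the natural number j+1
   (so z_{-1} ~ 0, z_n ~ n+1, z_{M+1} ~ M+2). Since z_{-1} < ... < z_{M+1}
   are fixed and distinct, a scattering sequence is determined by the
   sequence of indices of its entries. *)

Definition is_transmission (M : nat) (p : seq nat) : Prop :=
  [/\ 1 < size p,
      nth 0 p 0 = 0,
      nth 0 p (size p).-1 = M.+2,
      (forall i, 0 < i < (size p).-1 -> 1 <= nth 0 p i <= M.+1) &
      (forall i, i.+1 < size p ->
         (nth 0 p i.+1 == (nth 0 p i).+1) || (nth 0 p i == (nth 0 p i.+1).+1))].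

Fixpoint runs_aux (cur : nat) (s : seq bool) : seq nat :=
  match s with
  | [::] => if cur is 0 then [::] else [:: cur]
  | true :: s' => runs_aux cur.+1 s'
  | false :: s' => if cur is 0 then runs_aux 0 s' else cur :: runs_aux 0 s'
  end.
Definition runs (s : seq bool) : seq nat := runs_aux 0 s.

Definition nontrunk (r : seq nat) : seq nat := take (size r).-1 r.

(* runs of indices i with p_i in {z_n, ..., z_{M+1}}, i.e. encoded p_i >= n+1 *)
Definition level_runs (n : nat) (p : seq nat) : seq nat :=
  nontrunk (runs [seq n.+1 <= x | x <- p]).

Definition kappa' (M : nat) (p : seq nat) : {ffun 'I_M.+1 -> nat} :=
  [ffun n : 'I_M.+1 => size (level_runs n p)].
Definition beta' (M : nat) (p : seq nat) : {ffun 'I_M.+1 -> nat} :=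
  [ffun n : 'I_M.+1 => count (fun l => 1 < l) (level_runs n p)].

Definition ktilde (M : nat) (k : {ffun 'I_M.+1 -> nat}) (n : 'I_M.+1) : nat :=
  if n < M then k (inord n.+1) else 0.

From mathcomp Require Import all_boot zify.
Set Implicit Arguments. Unset Strict Implicit. Unset Printing Implicit Defensive.

(* Level n carries k_n off-trunk vertices labelled 0, ..., k_n - 1.  Label
   j < m_n continues to level n+1 (these m_n vertices are the branch points),
   while labels m_n, ..., k_{n+1} - 1 at level n+1 start new chains hanging off
   the trunk vertex z_n; the hypotheses m_n <= k_n and m_n <= k_{n+1} are exactly
   what makes this labelling consistent, and k_0 = 0 because no chain hangs off
   z_{-1}.  Every chain is realised as a straight excursion up from the trunk
   and back, and the walk climbs the trunk z_{-1}, ..., z_{M+1} performing at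
   each trunk vertex the excursions of the chains starting there.  The
   off-trunk runs at level n are then the excursions reaching z_n, i.e. the
   labels alive at level n, and such a run has length at least 2 exactly when
   its label continues to level n+1. *)

Lemma runs_aux_cat_false c s t :
  runs_aux c (s ++ false :: t) = runs_aux c s ++ runs_aux 0 t.
Proof.
by elim: s c => [|[] s IH] c /=; [case: c | rewrite IH | case: c => [|c]; rewrite ?IH].
Qed.

Lemma runs_aux_all_true c s : all id s ->
  runs_aux c s = if c + size s is 0 then [::] else [:: c + size s].
Proof.
elim: s c => [|b s IH] c /=; first by rewrite addn0; case: c.
by case/andP=> -> /IH ->; rewrite addSnnS.
Qed.

Definition runs_above (l : nat) (s : seq nat) : seq nat := runs [seq l < x | x <- s].

Lemma runs_above_cat_le l s x r : x <= l ->
  runs_above l (rcons s x ++ r) = runs_above l s ++ runs_above l r.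
Proof.
move=> le_xl; rewrite /runs_above /runs -cats1 -catA map_cat /= ltnNge le_xl.
exact: runs_aux_cat_false.
Qed.

Lemma runs_above_rcons_le l s x : x <= l -> runs_above l (rcons s x) = runs_above l s.
Proof. by move=> le_xl; rewrite -[rcons s x]cats0 runs_above_cat_le // cats0. Qed.

Lemma runs_above_cons_le l x s : x <= l -> runs_above l (x :: s) = runs_above l s.
Proof. by move=> le_xl; rewrite /runs_above /runs /= ltnNge le_xl. Qed.

Lemma runs_above_all_gt l s : s != [::] -> all (fun x => l < x) s ->
  runs_above l s = [:: size s].
Proof.
case: s => [|x s] // _ s_gt; rewrite /runs_above /runs runs_aux_all_true ?all_map //.
by rewrite size_map.
Qed.

Definition adjacent : rel nat := fun x y => (y == x.+1) || (x == y.+1).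

Fixpoint excursion (v h : nat) : seq nat :=
  if h is h'.+1 then v.+1 :: rcons (excursion v.+1 h') v else [::].

Lemma size_excursion v h : size (excursion v h) = h.*2.
Proof. by elim: h v => [|h IH] v //=; rewrite size_rcons IH doubleS. Qed.

Lemma excursion_bounds v h : all (fun x => v <= x <= v + h) (excursion v h).
Proof.
elim: h v => [|h IH] v //=; rewrite all_rcons leqnn leq_addr addnS ltnS leq_addr /=.
rewrite leqnSn; apply: sub_all (IH v.+1) => x /andP[/ltnW -> ].
by rewrite -addSn.
Qed.

Lemma excursion_path v h :
  path adjacent v (excursion v h) /\ last v (excursion v h) = v.
Proof.
elim: h v => [|h IH] v //=; have [p_ex last_ex] := IH v.+1.
by rewrite rcons_path last_rcons p_ex last_ex /adjacent !eqxx orbT.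
Qed.

Definition excursion_runs (l v h : nat) : seq nat :=
  if l < v + h then [:: (v + h - l).*2.-1] else [::].

Lemma runs_above_excursion l v h : v <= l ->
  runs_above l (excursion v h) = excursion_runs l v h.
Proof.
rewrite /excursion_runs; elim: h v => [|h IH] v le_vl /=.
  by rewrite addn0 ltnNge le_vl.
rewrite -rcons_cons runs_above_rcons_le //.
have [lt_vl | ge_vl] := ltnP v l.
  by rewrite runs_above_cons_le // IH // addnS addSn.
have -> : l = v by apply/eqP; rewrite eqn_leq ge_vl le_vl.
rewrite /runs_above /runs /= ltnSn runs_aux_all_true; last first.
  by apply/allP => b /mapP[x /(allP (excursion_bounds _ _)) /andP[+ _] ->].
by rewrite size_map size_excursion addKn addnS ltnS leq_addr doubleS.
Qed.

Lemma runs_above_excursion_cat l v h r : v <= l ->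
  runs_above l (excursion v h ++ r) = excursion_runs l v h ++ runs_above l r.
Proof.
move=> le_vl; case: h => [|h]; first by rewrite /excursion_runs addn0 ltnNge le_vl.
rewrite -runs_above_excursion //= -cat_cons -rcons_cons runs_above_cat_le //.
by rewrite runs_above_rcons_le.
Qed.

Lemma size_excursion_runs l v h : size (excursion_runs l v h) = (l < v + h).
Proof. by rewrite /excursion_runs; case: ifP. Qed.

Lemma count_excursion_runs l v h :
  count (fun r => 1 < r) (excursion_runs l v h) = (l.+1 < v + h).
Proof. by rewrite /excursion_runs; case: ltnP => lt_lvh /=; case: ltnP; lia. Qed.

Lemma is_transmission_intro M q :
  path adjacent 0 (q ++ [:: M.+2]) -> all (fun x => 0 < x <= M.+1) q ->
  is_transmission M (0 :: q ++ [:: M.+2]).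
Proof.
move=> p_q q_bounds; split=> //=; rewrite size_cat addn1 //=.
- by rewrite nth_cat ltnn subnn.
- case=> [|i] // /andP[_]; rewrite ltnS => lt_iq /=.
  by rewrite nth_cat lt_iq (allP q_bounds) ?mem_nth.
- by move=> i lt_iq; apply: (pathP 0 p_q); rewrite size_cat addn1.
Qed.

Lemma flatten_loops_path (T : eqType) (e : rel T) x (ss : seq (seq T)) :
  {in ss, forall s, path e x s /\ last x s = x} ->
  path e x (flatten ss) /\ last x (flatten ss) = x.
Proof.
elim: ss => [|s ss IH] // loops /=; have [p_s last_s] := loops s (mem_head s ss).
have [p_ss last_ss] := IH (fun t t_ss => loops t (mem_behead (s := s :: ss) t_ss)).
by rewrite cat_path last_cat p_s last_s p_ss last_ss.
Qed.

Definition excursions (v : nat) (hs : seq nat) : seq nat :=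
  flatten [seq excursion v h | h <- hs].

Definition excursions_runs (l v : nat) (hs : seq nat) : seq nat :=
  flatten [seq excursion_runs l v h | h <- hs].

Lemma excursions_ge v hs : all (leq v) (excursions v hs).
Proof.
by apply/allP => x /flatten_mapP[h _ /(allP (excursion_bounds _ _)) /andP[]].
Qed.

Lemma excursions_path v hs :
  path adjacent v (excursions v hs) /\ last v (excursions v hs) = v.
Proof. by apply: flatten_loops_path => _ /mapP[h _ ->]; apply: excursion_path. Qed.

Lemma runs_above_excursions_cat l v hs r : v <= l ->
  runs_above l (excursions v hs ++ r) = excursions_runs l v hs ++ runs_above l r.
Proof.
move=> le_vl; rewrite /excursions /excursions_runs.
by elim: hs => [|h hs IH] //=; rewrite -catA runs_above_excursion_cat // IH catA.
Qed.

Lemma size_excursions_runs l v hs :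
  size (excursions_runs l v hs) = count (fun h => l < v + h) hs.
Proof.
rewrite size_flatten /shape -map_comp -sumn_count; congr sumn.
by apply: eq_map => h; apply: size_excursion_runs.
Qed.

Lemma count_excursions_runs l v hs :
  count (fun r => 1 < r) (excursions_runs l v hs) = count (fun h => l.+1 < v + h) hs.
Proof.
rewrite count_flatten -map_comp -sumn_count; congr sumn.
by apply: eq_map => h; apply: count_excursion_runs.
Qed.

Lemma filter_iota0_ltn c n : c <= n -> [seq j <- iota 0 n | j < c] = iota 0 c.
Proof. exact: filter_iota_ltn. Qed.

Section Witness.

Variables (M : nat) (k m : {ffun 'I_M.+1 -> nat}).

Definition zext (f : {ffun 'I_M.+1 -> nat}) (n : nat) : nat :=
  if n <= M then f (inord n) else 0.

Lemma zext_ord f (n : 'I_M.+1) : zext f n = f n.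
Proof. by rewrite /zext -ltnS ltn_ord inord_val. Qed.

Lemma zext_out f n : M < n -> zext f n = 0.
Proof. by rewrite /zext ltnNge => /negbTE ->. Qed.

Lemma zext_leq (f : {ffun 'I_M.+1 -> nat}) (g : nat -> nat) :
  (forall n : 'I_M.+1, f n <= g n) -> forall n, zext f n <= g n.
Proof.
move=> le_fg n; have [le_nM | /(zext_out f) -> //] := leqP n M.
by have := le_fg (inord n); rewrite -zext_ord inordK.
Qed.

Lemma ktildeE (n : 'I_M.+1) : ktilde k n = zext k n.+1.
Proof. by rewrite /ktilde /zext; case: ifP. Qed.

(* A trunk vertex is given by its encoded depth [v], i.e. z_{v-1}; [labels v]
   are the labels of the chains whose first vertex is z_v. *)
Definition labels (v : nat) : seq nat := index_iota (zext m v.-1) (zext k v).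

Definition survives (v l j : nat) : bool := all (fun n => j < zext m n) (index_iota v l).

Lemma survivesS v l j : v <= l -> survives v l.+1 j = survives v l j && (j < zext m l).
Proof.
move=> le_vl; rewrite /survives /index_iota subSn // -[(l - v).+1]addn1 iotaD.
by rewrite all_cat subnKC //= andbT.
Qed.

Definition chain_height (v j : nat) : nat :=
  (find (fun n => zext m n <= j) (index_iota v M.+1)).+1.

Lemma chain_heightE v l j : v <= l <= M.+1 ->
  (l < v + chain_height v j) = survives v l j.
Proof.
case/andP=> le_vl le_lM.
rewrite /chain_height /survives addnS ltnS -leq_subLR leqNgt -has_take_leq; last first.
  by rewrite size_iota leq_sub2r.
rewrite -all_predC /index_iota take_iota (minn_idPl (leq_sub2r v le_lM)).
by apply: eq_all => n /=; rewrite ltnNge.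
Qed.

Definition heights (v : nat) : seq nat := [seq chain_height v j | j <- labels v].

Fixpoint trunk_walk (v n : nat) : seq nat :=
  if n is n'.+1 then v :: excursions v (heights v) ++ trunk_walk v.+1 n' else [::].

Definition witness : seq nat := 0 :: trunk_walk 1 M.+1 ++ [:: M.+2].

Lemma trunk_walk_cat v a b :
  trunk_walk v (a + b) = trunk_walk v a ++ trunk_walk (v + a) b.
Proof. by elim: a v => [|a IH] v /=; rewrite ?addn0 // IH -catA addnS. Qed.

Lemma trunk_walk_ge v n : all (leq v) (trunk_walk v n).
Proof.
elim: n v => [|n IH] v //=; rewrite leqnn all_cat excursions_ge /=.
by apply: sub_all (IH v.+1) => x; apply: ltnW.
Qed.

Lemma trunk_walk_path u n :
  path adjacent u (trunk_walk u.+1 n) /\ last u (trunk_walk u.+1 n) = u + n.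
Proof.
elim: n u => [|n IH] u /=; first by rewrite addn0.
have [p_ex last_ex] := excursions_path u.+1 (heights u.+1); have [p_tw last_tw] := IH u.+1.
by rewrite cat_path last_cat p_ex last_ex p_tw last_tw addSnnS /adjacent eqxx.
Qed.

Lemma runs_above_trunk_walk_cat l v n r : v + n <= l.+1 ->
  runs_above l (trunk_walk v n ++ r) =
  flatten [seq excursions_runs l w (heights w) | w <- iota v n] ++ runs_above l r.
Proof.
elim: n v => [|n IH] v //= le_vnl.
have le_vl : v <= l by rewrite -ltnS (leq_trans _ le_vnl) // addnS ltnS leq_addr.
rewrite runs_above_cons_le // -catA.
by rewrite runs_above_excursions_cat // IH ?catA // addSnnS.
Qed.

Lemma level_runs_witness l : l <= M ->
  level_runs l witness = flatten [seq excursions_runs l v (heights v) | v <- iota 1 l].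
Proof.
move=> le_lM; have le_lM1 : l <= M.+1 := leqW le_lM.
rewrite /level_runs -/(runs_above l witness) /witness -{1}(subnKC le_lM1) trunk_walk_cat.
rewrite runs_above_cons_le // -catA runs_above_trunk_walk_cat //.
rewrite cats1 runs_above_all_gt.
- by rewrite /nontrunk size_cat addn1 take_size_cat.
- by rewrite -size_eq0 size_rcons.
rewrite all_rcons /= ltnS le_lM1; apply: sub_all (trunk_walk_ge _ _) => x.
by rewrite add1n.
Qed.

Lemma count_heights_above l v : v <= l <= M.+1 ->
  count (fun h => l < v + h) (heights v) = count (survives v l) (labels v).
Proof. by move=> vlM; rewrite count_map; apply: eq_count => j /=; rewrite chain_heightE. Qed.

Definition survivors (l : nat) : seq nat :=
  flatten [seq filter (survives v l) (labels v) | v <- iota 1 l].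

Hypotheses (k0 : zext k 0 = 0) (m_le_k : forall n, zext m n <= zext k n)
  (m_le_k_succ : forall n, zext m n <= zext k n.+1).

Lemma perm_survivors l : perm_eq (survivors l) (iota 0 (zext k l)).
Proof.
elim: l => [|l IH]; first by rewrite k0.
rewrite /survivors -addn1 iotaD map_cat flatten_cat /= cats0.
have -> : [seq filter (survives v (l + 1)) (labels v) | v <- iota 1 l] =
          [seq filter (fun j => j < zext m l) s
             | s <- [seq filter (survives v l) (labels v) | v <- iota 1 l]].
  rewrite -map_comp; apply/eq_in_map => v; rewrite mem_iota add1n ltnS => /andP[_ le_vl].
  rewrite /= -filter_predI addn1; apply: eq_filter => j /=.
  by rewrite survivesS // andbC.
rewrite -filter_flatten -/(survivors l) addn1 add1n.
have -> : filter (survives l.+1 l.+1) (labels l.+1) = labels l.+1.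
  by apply/all_filterP/allP => j _; rewrite /survives /index_iota subnn.
rewrite /labels /index_iota -{2}(subnKC (m_le_k_succ l)) iotaD add0n /=.
apply: perm_cat => //; apply: perm_trans (perm_filter _ IH) _.
by rewrite filter_iota0_ltn.
Qed.

Lemma size_level_runs_witness l : l <= M ->
  size (level_runs l witness) = size (survivors l).
Proof.
move=> le_lM; rewrite level_runs_witness // /survivors !size_flatten /shape -!map_comp.
congr sumn; apply/eq_in_map => v; rewrite mem_iota add1n ltnS => /andP[_ le_vl] /=.
by rewrite size_excursions_runs size_filter count_heights_above // le_vl leqW.
Qed.

Lemma count_level_runs_witness l : l <= M ->
  count (fun r => 1 < r) (level_runs l witness) =
  count (fun j => j < zext m l) (survivors l).
Proof.
move=> le_lM; rewrite level_runs_witness // /survivors !count_flatten -!map_comp.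
congr sumn; apply/eq_in_map => v; rewrite mem_iota add1n ltnS => /andP[_ le_vl] /=.
rewrite count_excursions_runs count_heights_above ?ltnS ?le_lM ?(leqW le_vl) //.
by rewrite count_filter; apply: eq_count => j; rewrite /= survivesS // andbC.
Qed.

Lemma excursions_le v : all (fun x => x <= M.+1) (excursions v (heights v)).
Proof.
apply/allP => x /flatten_mapP[_ /mapP[j j_lab ->]].
move=> /(allP (excursion_bounds _ _)) /andP[_ /leq_trans]; apply.
have le_vM : v <= M.
  rewrite leqNgt; apply/negP => /(zext_out k) kv0.
  by move: j_lab; rewrite mem_index_iota kv0 ltn0 andbF.
have mM0 : zext m M = 0 by apply/eqP; rewrite -leqn0 -(zext_out k (ltnSn M)).
rewrite leqNgt chain_heightE; last by rewrite (leqW le_vM) leqnn.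
by rewrite survivesS // mM0 ltn0 andbF.
Qed.

Lemma trunk_walk_bounds v n : 0 < v -> v + n <= M.+2 ->
  all (fun x => 0 < x <= M.+1) (trunk_walk v n).
Proof.
elim: n v => [|n IH] v //= v_gt0 le_vnM.
have le_vM : v <= M.+1 by rewrite -ltnS (leq_trans _ le_vnM) // addnS ltnS leq_addr.
rewrite v_gt0 le_vM all_cat IH ?andbT //; last by rewrite addSnnS.
apply/allP => x x_ex; rewrite (allP (excursions_le v) x x_ex) andbT.
exact: leq_trans v_gt0 (allP (excursions_ge _ _) x x_ex).
Qed.

Lemma witness_transmission : is_transmission M witness.
Proof.
apply: is_transmission_intro; last exact: trunk_walk_bounds.
have [p_tw last_tw] := trunk_walk_path 0 M.+1.
by rewrite cat_path p_tw last_tw /= /adjacent eqxx.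
Qed.

Lemma kappa'_witness : kappa' M witness = k.
Proof.
apply/ffunP => n; rewrite ffunE size_level_runs_witness -1?ltnS //.
by rewrite (perm_size (perm_survivors n)) size_iota zext_ord.
Qed.

Lemma beta'_witness : beta' M witness = m.
Proof.
apply/ffunP => n; rewrite ffunE count_level_runs_witness -1?ltnS //.
rewrite (permP (perm_survivors n)) -size_filter (filter_iota0_ltn (m_le_k n)).
by rewrite size_iota zext_ord.
Qed.

End Witness.

Theorem proposition2 (M : nat) (hM : 1 <= M)
    (k m : {ffun 'I_M.+1 -> nat})
    (hk0 : k ord0 = 0)
    (hm : forall n : 'I_M.+1, m n <= minn (k n) (ktilde k n)) :
  exists p : seq nat, is_transmission M p /\ kappa' M p = k /\ beta' M p = m.
Proof.
have k0 : zext k 0 = 0 := etrans (zext_ord k ord0) hk0.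
have m_le_k : forall n, zext m n <= zext k n.
  by apply: zext_leq => n; rewrite zext_ord (leq_trans (hm n)) ?geq_minl.
have m_le_k_succ : forall n, zext m n <= zext k n.+1.
  by apply: zext_leq => n; rewrite -ktildeE (leq_trans (hm n)) ?geq_minr.
exists (witness k m); split; first exact: witness_transmission.
by split; [apply: kappa'_witness | apply: beta'_witness].
Qed.
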